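(* Let $G$ be a finite abstract simplicial complex. Then $\sum_{x\in G} \omega(x)\big(1-\chi(S(x))\big)=\chi(G)$.
   Context: A finite abstract simplicial complex $G$ is a finite set of non-empty finite sets closed under taking non-empty subsets. $\omega(x)=(-1)^{|x|-1}$ and $\chi(G)=\sum_{x\in G}\omega(x)$. The Barycentric refinement $G_1$ is the graph with vertex set $G$ where $x\neq y$ are adjacent iff $x\subset y$ or $y\subset x$. The unit sphere $S(x)$ is the set of simplices $y\in G$ with $y\subsetneq x$ or $x\subsetneq y$; $\chi(S(x))$ denotes the Euler characteristic of the Whitney (clique) complex of the subgraph of $G_1$ induced on $S(x)$, i.e. $\sum_{K}(-1)^{|K|-1}$ over all non-empty cliques $K$ of that induced subgraph. *)

From mathcomp Require Import all_boot all_order all_algebra.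
Set Implicit Arguments. Unset Strict Implicit. Unset Printing Implicit Defensive.
Import GRing.Theory Num.Theory.
Local Open Scope ring_scope.

Definition is_complex (T : finType) (G : {set {set T}}) : Prop :=
  set0 \notin G /\
  (forall x y : {set T}, x \in G -> y \subset x -> y != set0 -> y \in G).

Definition omega (U : finType) (x : {set U}) : int := (-1) ^+ (#|x|.-1).

Definition chi (T : finType) (G : {set {set T}}) : int :=
  \sum_(x in G) omega x.

(* unit sphere S(x) in the Barycentric refinement G_1 *)
Definition usphere (T : finType) (G : {set {set T}}) (x : {set T})
  : {set {set T}} :=
  [set y in G | (y \proper x) || (x \proper y)].

(* K is a clique of G_1: distinct elements are comparable by inclusion *)
Definition is_clique (T : finType) (K : {set {set T}}) : bool :=
  [forall x in K, forall y in K, (x != y) ==> ((x \subset y) || (y \subset x))].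

(* Euler characteristic of the Whitney complex of the subgraph of G_1
   induced on V: sum over non-empty cliques K of (-1)^(|K|-1). *)
Definition whitney_chi (T : finType) (V : {set {set T}}) : int :=
  \sum_(K : {set {set T}} | (K != set0) && (K \subset V) && is_clique K)
     omega K.

From mathcomp Require Import all_boot all_order all_algebra ring.
Import GRing.Theory Num.Theory.
Local Open Scope ring_scope.
Set Implicit Arguments. Unset Strict Implicit.

(* Writing 1 - chi(S(x)) as a signed count of all cliques of S(x), the empty
   one included, and adding x to each of them, the left-hand side becomes
   minus the sum of sgn(C) * sum_(x in C) omega(x) over the cliques C of G_1.
   A nonempty clique is a chain of faces with a largest face y, and the other
   faces of C form a clique of the refinement of the boundary of y, a complex
   of Euler characteristic 1 - omega(y).  Induction over complexes through
   these boundaries gives chi(G_1) = chi(G) and then the value -chi(G) of the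
   weighted clique sum. *)

Lemma reindex_setU1 (R : Type) (idx : R) (op : Monoid.com_law idx)
    (U : finType) (a : U) (P Q : pred {set U}) (F : {set U} -> R) :
  (forall A, P A -> a \notin A /\ Q (a |: A)) ->
  (forall C, Q C -> a \in C /\ P (C :\ a)) ->
  \big[op/idx]_(A | P A) F (a |: A) = \big[op/idx]_(C | Q C) F C.
Proof.
move=> PQ QP; rewrite [RHS](reindex_onto (fun A => a |: A) (fun C => C :\ a)); last first.
  by move=> C /QP[aC _]; rewrite setD1K.
apply: eq_bigl => A; apply/idP/andP => [PA | [QA /eqP <-]]; last by case: (QP _ QA).
by have [aA ->] := PQ _ PA; rewrite setU1K.
Qed.

(* Unlike omega, this gives the empty clique the weight 1 that accounts for the
   1 in 1 - whitney_chi. *)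
Definition sgn (U : finType) (A : {set U}) : int := (-1) ^+ #|A|.

Lemma sgn0 (U : finType) : sgn (set0 : {set U}) = 1.
Proof. by rewrite /sgn cards0. Qed.

Lemma sgnU1 (U : finType) (a : U) (A : {set U}) : a \notin A -> sgn (a |: A) = - sgn A.
Proof. by move=> aA; rewrite /sgn cardsU1 aA exprS mulN1r. Qed.

Lemma sgn_omega (U : finType) (A : {set U}) : A != set0 -> sgn A = - omega A.
Proof. by rewrite -card_gt0 /sgn /omega => /prednK {1}<-; rewrite exprS mulN1r. Qed.

Lemma omegaK (U : finType) (A : {set U}) : omega A * omega A = 1.
Proof. by rewrite -expr2 sqrr_sign. Qed.

Lemma sum_sgn_subsets (U : finType) (y : {set U}) :
  y != set0 -> \sum_(z : {set U} | z \subset y) sgn z = 0.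
Proof.
case/set0Pn => a ay; rewrite (bigID (fun z : {set U} => a \in z)) /= addrC.
have <- : \sum_(z : {set U} | (z \subset y) && (a \notin z)) sgn (a |: z)
          = \sum_(z : {set U} | (z \subset y) && (a \in z)) sgn z.
  apply: reindex_setU1 => [z /andP[zy az] | z /andP[zy az]].
    by rewrite setU11 subUset sub1set ay zy.
  by rewrite setD11 subDset (subset_trans zy) ?subsetUr.
by rewrite -big_split big1 // => z /andP[_ az]; rewrite sgnU1 //; apply: addrN.
Qed.

Section Cliques.
Variable T : finType.
Implicit Types (x y z : {set T}) (A C V : {set {set T}}).

Definition cliques V : {set {set {set T}}} :=
  [set A : {set {set T}} | (A \subset V) && is_clique A].

Lemma cliqueP A : reflect (forall x y, x \in A -> y \in A -> x != y ->
  (x \subset y) || (y \subset x)) (is_clique A).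
Proof.
apply: (iffP forallP) => [cl x y xA yA | cl x].
  by move: (implyP (cl x) xA) => /forall_inP/(_ y yA)/implyP.
by apply/implyP => xA; apply/forall_inP => y yA; apply/implyP; apply: cl.
Qed.

Lemma clique0 : is_clique (set0 : {set {set T}}).
Proof. by apply/cliqueP => x y; rewrite inE. Qed.

Lemma cliqueS A C : A \subset C -> is_clique C -> is_clique A.
Proof.
move=> /subsetP AC /cliqueP cl; apply/cliqueP => x y /AC + /AC; exact: cl.
Qed.

Lemma cliqueU1 y A : is_clique A ->
  (forall x, x \in A -> (x \subset y) || (y \subset x)) -> is_clique (y |: A).
Proof.
move=> /cliqueP cl yA; apply/cliqueP => a b; rewrite !in_setU1.
case/predU1P => [->|aA]; case/predU1P => [->|bA].
- by rewrite eqxx.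
- by rewrite orbC yA.
- by rewrite yA.
- exact: cl.
Qed.

Lemma clique_top A : is_clique A -> A != set0 ->
  exists2 y, y \in A & A \subset powerset y.
Proof.
move=> /cliqueP cl /set0Pn[y0 y0A].
have [y yA ymax] := arg_maxnP (fun y => #|y|) y0A.
exists y => //; apply/subsetP => x xA; rewrite powersetE.
have [-> // | xy] := eqVneq x y.
case/orP: (cl x y xA yA xy) => // yx.
have ltyx : y \proper x by rewrite properEneq eq_sym xy yx.
by move: (ymax x xA) => /=; rewrite leqNgt proper_card.
Qed.

Lemma one_sub_whitney_chi V : 1 - whitney_chi V = \sum_(A in cliques V) sgn A.
Proof.
rewrite (bigD1 set0) ?inE ?sub0set ?clique0 //= sgn0 /whitney_chi -sumrN.
congr (_ + _); apply: eq_big => [A | A /andP[/andP[A0 _] _]].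
  by rewrite inE [RHS]andbC andbA.
by rewrite sgn_omega ?opprK.
Qed.

Definition boundary y : {set {set T}} := [set z | (z != set0) && (z \proper y)].

Lemma complex_neq0 V y : is_complex V -> y \in V -> y != set0.
Proof. by case=> V0 _ yV; apply: contraNneq V0 => <-. Qed.

Lemma boundary_complex y : is_complex (boundary y).
Proof.
split; first by rewrite inE eqxx.
by move=> x z; rewrite !inE => /andP[_ xy] zx ->; apply: sub_proper_trans zx xy.
Qed.

Lemma boundary_irrefl y : y \notin boundary y.
Proof. by rewrite inE properxx andbF. Qed.

Lemma boundary_notin_cliques y A : A \in cliques (boundary y) -> y \notin A.
Proof. by case/setIdP=> /subsetP Ay _; apply: contra (Ay y) (boundary_irrefl y). Qed.

Lemma in_boundary V y z : is_complex V -> y \in V ->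
  (z \in boundary y) = (z \in V) && (z \proper y).
Proof.
move=> cV yV; rewrite inE; apply/andP/andP => [[z0 zy] | [zV zy]].
  by split=> //; apply: cV.2 yV (proper_sub zy) z0.
by split=> //; apply: complex_neq0 cV zV.
Qed.

Lemma boundary_proper V y : is_complex V -> y \in V -> boundary y \proper V.
Proof.
move=> cV yV; rewrite properE; apply/andP; split.
  by apply/subsetP => z; rewrite (in_boundary _ cV yV) => /andP[].
by apply/subsetPn; exists y; rewrite ?boundary_irrefl.
Qed.

Lemma chi_boundary y : y != set0 -> chi (boundary y) = 1 - omega y.
Proof.
move=> y0; have := sum_sgn_subsets y0.
rewrite (bigD1 set0) ?sub0set //= (bigD1 y) /=; last by rewrite subxx y0.
have -> : \sum_(z : {set T} | (z \subset y) && (z != set0) && (z != y)) sgn z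
          = - chi (boundary y).
  rewrite /chi -sumrN; apply: eq_big => [z | z /andP[/andP[_ z0] _]].
    by rewrite inE properEneq; case: (z \subset y); rewrite /= ?andbT ?andbF.
  by rewrite sgn_omega.
by rewrite sgn0 sgn_omega // addrA => /eqP; rewrite addr_eq0 opprK => /eqP.
Qed.

Lemma complex_ind (P : {set {set T}} -> Prop) :
  (forall V, is_complex V -> (forall y, y \in V -> P (boundary y)) -> P V) ->
  forall V, is_complex V -> P V.
Proof.
move=> IH V; have [n] := ubnP #|V|; elim: n V => // n IHn V ltVn cV.
apply: IH => // y yV; apply: IHn (boundary_complex y).
exact: leq_trans (proper_card (boundary_proper cV yV)) ltVn.
Qed.

Lemma cliques_with_top V y C : is_complex V -> y \in V -> y \in C ->
  (C \in cliques V) && (C \subset powerset y) = (C :\ y \in cliques (boundary y)).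
Proof.
move=> cV yV yC; have sVy := proper_sub (boundary_proper cV yV).
rewrite !inE; apply/idP/andP => [/andP[/andP[CV clC] Cy] | [Cy clC]].
  split; last exact: cliqueS (subD1set C y) clC.
  apply/subsetP => z; rewrite in_setD1 (in_boundary _ cV yV) => /andP[zy zC].
  by rewrite (subsetP CV) //= properEneq zy -powersetE (subsetP Cy).
have sCy z : z \in C :\ y -> z \proper y by move/(subsetP Cy); rewrite inE => /andP[].
rewrite -(setD1K yC) !subUset !sub1set yV powersetE subxx (subset_trans Cy sVy) /=.
rewrite cliqueU1 // => [|z /sCy/proper_sub ->//].
by apply/subsetP => z /sCy/proper_sub; rewrite powersetE.
Qed.

Lemma sum_cliques_by_top (R : nmodType) V (F : {set {set T}} -> R) :
  is_complex V ->
  \sum_(C in cliques V | C != set0) F C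
  = \sum_(y in V) \sum_(A in cliques (boundary y)) F (y |: A).
Proof.
move=> cV.
rewrite (eq_bigr (fun C => \sum_(y in V | (y \in C) && (C \subset powerset y)) F C)).
  rewrite (exchange_big_dep (fun y => y \in V)) => [|C y _ /andP[]//].
  apply: eq_bigr => y yV; symmetry; apply: reindex_setU1 => [A clA | C].
    have yA := boundary_notin_cliques clA.
    have := cliques_with_top cV yV (setU11 y A); rewrite setU1K // clA.
    case/andP=> -> ->; rewrite yV setU11 /= andbT; split=> //.
    by apply/set0Pn; exists y; rewrite setU11.
  case/and4P=> /andP[clC _] _ yC Cy.
  by rewrite -(cliques_with_top cV yV yC) clC Cy.
move=> C /andP[]; rewrite inE => /andP[CV clC] C0.
have [y yC Cy] := clique_top clC C0.
rewrite (big_pred1 y) // => y'; apply/idP/eqP => [/and3P[_ y'C Cy'] | ->].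
  by apply/eqP; rewrite eqEsubset -!powersetE (subsetP Cy) ?(subsetP Cy').
by rewrite (subsetP CV) ?yC.
Qed.

Lemma whitney_chi_complex V : is_complex V -> whitney_chi V = chi V.
Proof.
move: V; apply: complex_ind => V cV IH.
suff : 1 - whitney_chi V = 1 - chi V by move/addrI/oppr_inj.
rewrite one_sub_whitney_chi (bigD1 set0) ?inE ?sub0set ?clique0 //= sgn0.
rewrite sum_cliques_by_top // /chi -sumrN; congr (1 + _); apply: eq_bigr => y yV.
rewrite (eq_bigr (fun A => - sgn A)) => [|A /boundary_notin_cliques]; last exact: sgnU1.
rewrite sumrN -one_sub_whitney_chi IH // chi_boundary ?(complex_neq0 cV yV) //.
by rewrite subKr.
Qed.

Lemma sum_cliques_omega V : is_complex V ->
  \sum_(A in cliques V) sgn A * \sum_(x in A) omega x = - chi V.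
Proof.
move: V; apply: complex_ind => V cV IH.
rewrite (bigD1 set0) ?inE ?sub0set ?clique0 //= big_set0 mulr0 add0r.
rewrite sum_cliques_by_top // /chi -sumrN; apply: eq_bigr => y yV.
transitivity (- (omega y * (1 - whitney_chi (boundary y)) + - chi (boundary y))).
  rewrite one_sub_whitney_chi -IH // mulr_sumr -big_split -sumrN /=.
  apply: eq_bigr => A /boundary_notin_cliques yA.
  by rewrite sgnU1 // big_setU1 //=; ring.
rewrite (whitney_chi_complex (boundary_complex y)) chi_boundary ?(complex_neq0 cV yV) //.
by rewrite subKr omegaK subKr.
Qed.

Lemma sum_cliques_usphere (G : {set {set T}}) x : x \in G ->
  \sum_(A in cliques (usphere G x)) sgn A = - \sum_(C in cliques G | x \in C) sgn C.
Proof.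
move=> xG.
have xS A : A \in cliques (usphere G x) -> x \notin A.
  by case/setIdP=> /subsetP AS _; apply/negP => /AS; rewrite inE properxx orbF andbF.
transitivity (- \sum_(A in cliques (usphere G x)) sgn (x |: A)).
  by rewrite -sumrN; apply: eq_bigr => A /xS xA; rewrite sgnU1 ?opprK.
congr (- _); apply: reindex_setU1 => [A clA | C /andP[/setIdP[/subsetP CG clC] xC]].
  split; first exact: xS.
  case/setIdP: clA => /subsetP AS clA.
  rewrite setU11 andbT inE subUset sub1set xG; apply/andP; split.
    by apply/subsetP => w /AS; rewrite inE => /andP[].
  apply: cliqueU1 => // w /AS; rewrite inE => /andP[_ /orP[]] /proper_sub ->;
    by rewrite ?orbT.
split=> //; rewrite inE (cliqueS (subD1set C x)) // andbT.
apply/subsetP => w; rewrite !inE => /andP[wx wC].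
rewrite CG //= !properEneq wx eq_sym wx.
by move/cliqueP: clC; apply.
Qed.

End Cliques.

Theorem mainTheorem8 (T : finType) (G : {set {set T}}) :
  is_complex G ->
  \sum_(x in G) omega x * (1 - whitney_chi (usphere G x)) = chi G.
Proof.
move=> cG.
transitivity (- \sum_(x in G) \sum_(C in cliques G | x \in C) omega x * sgn C).
  rewrite -sumrN; apply: eq_bigr => x xG.
  by rewrite one_sub_whitney_chi sum_cliques_usphere // mulrN mulr_sumr.
rewrite (exchange_big_dep (fun C => C \in cliques G)) => [|x C _ /andP[]//].
rewrite -[RHS]opprK -sum_cliques_omega //; congr (- _); apply: eq_bigr => C clC.
rewrite mulrC mulr_suml; apply: eq_bigl => x; rewrite clC /=.
by case xC: (x \in C); rewrite ?andbF ?andbT // (subsetP (setIdP clC).1).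
Qed.
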